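(* Let $\mathcal U_1,\mathcal U_2$ be essential covers of $X$, let $f\colon X\to X$ be a map, and let $\mathcal F_1\colon\mathcal U_1\multimap\mathcal U_1$ be a representation of $f$. If $\mathcal R^-(\mathcal U_2)>\mathcal R^+(\mathcal F_1)$, then every representation $\mathcal F_2\colon\mathcal U_2\multimap\mathcal U_2$ of $f$ is coarser than $\mathcal F_1$ (i.e. $\mathcal F_1$ is finer than $\mathcal F_2$).
   Context: $X$ is a nonempty metric space with bounded metric $d$; $B(x,r)=\{y\in X:d(x,y)<r\}$ for $r>0$ and $B(x,0)=\{x\}$. For a family $\mathcal A$ of subsets of $X$, $|\mathcal A|:=\bigcup_{A\in\mathcal A}A$. A cover of $X$ is a finite family $\mathcal U$ of open subsets of $X$ with $|\mathcal U|=X$. A cover $\mathcal U$ is essential if there is $\varepsilon>0$ such that every $U\in\mathcal U$ contains a point $x$ with $B(x,\varepsilon)\subset U$ and $B(x,\varepsilon)\cap W=\emptyset$ for all $W\in\mathcal U\setminus\{U\}$. Inner resolution: $\mathcal R^-(\mathcal U)=\sup\{d\ge0:\forall x\in X\ \exists U\in\mathcal U:\ B(x,d)\subset U\}$. $\mathcal U_1\prec\mathcal U_2$ means every element of $\mathcal U_1$ is contained in some element of $\mathcal U_2$ and every element of $\mathcal U_2$ contains some element of $\mathcal U_1$. A combinatorial map $\mathcal F\colon\mathcal U\multimap\mathcal U$ assigns to each $U\in\mathcal U$ a subset $\mathcal F(U)\subset\mathcal U$; it is a representation of $f$ if $\mathcal F(U)\supseteq\{W\in\mathcal U:W\cap f(U)\neq\emptyset\}$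 for all $U$. $\mathcal R^+(\mathcal F)=\max\{\operatorname{diam}U,\operatorname{diam}|\mathcal F(U)|:U\in\mathcal U\}$. $\mathcal F_1\colon\mathcal U_1\multimap\mathcal U_1$ is finer than $\mathcal F_2\colon\mathcal U_2\multimap\mathcal U_2$ if $\mathcal U_1\prec\mathcal U_2$ and for every $U_1\in\mathcal U_1$ and every $U_2\in\mathcal U_2$ with $U_1\subset U_2$, every element of $\mathcal F_1(U_1)$ is contained in some element of $\mathcal F_2(U_2)$. *)

From Stdlib Require Import Reals List.
Open Scope R_scope.

Section Defs.
Context {X : Type} (d : X -> X -> R).

Definition is_metric : Prop :=
  (forall x y, 0 <= d x y) /\ (forall x y, d x y = 0 <-> x = y) /\
  (forall x y, d x y = d y x) /\ (forall x y z, d x z <= d x y + d y z).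

Definition bounded_metric : Prop := exists M, forall x y, d x y <= M.

Definition ball (x : X) (r : R) (y : X) : Prop :=
  (0 < r /\ d x y < r) \/ (r <= 0 /\ y = x).

Definition is_open (A : X -> Prop) : Prop :=
  forall x, A x -> exists e, 0 < e /\ forall y, d x y < e -> A y.

Definition subset (A B : X -> Prop) : Prop := forall x, A x -> B x.

(* |A| for a finite family given as a list *)
Definition union (l : list (X -> Prop)) (x : X) : Prop :=
  exists A, In A l /\ A x.

Definition is_cover (U : list (X -> Prop)) : Prop :=
  (forall A, In A U -> is_open A) /\ (forall x, union U x).

Definition is_essential (U : list (X -> Prop)) : Prop :=
  exists eps, 0 < eps /\
    forall A, In A U -> exists x,
      subset (ball x eps) A /\
      (forall W, In W U -> W <> A -> forall y, ball x eps y -> ~ W y).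

Definition essential_cover (U : list (X -> Prop)) : Prop :=
  is_cover U /\ is_essential U.

Definition inner_res_ok (U : list (X -> Prop)) (r : R) : Prop :=
  0 <= r /\ forall x, exists A, In A U /\ subset (ball x r) A.

(* R^-(U) > r  (R^- is the sup of admissible radii, possibly +infinity) *)
Definition inner_res_gt (U : list (X -> Prop)) (r : R) : Prop :=
  exists s, inner_res_ok U s /\ r < s.

Definition diam_le (A : X -> Prop) (r : R) : Prop :=
  forall x y, A x -> A y -> d x y <= r.

Definition comb_map (U : list (X -> Prop)) (F : (X -> Prop) -> list (X -> Prop)) : Prop :=
  forall A, In A U -> forall W, In W (F A) -> In W U.

Definition is_representation (f : X -> X) (U : list (X -> Prop))
    (F : (X -> Prop) -> list (X -> Prop)) : Prop :=
  comb_map U F /\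
  forall A, In A U -> forall W, In W U -> (exists x, A x /\ W (f x)) -> In W (F A).

(* R^+(F) <= r, i.e. max over A in U of diam A and diam |F(A)| is <= r *)
Definition outer_res_le (U : list (X -> Prop)) (F : (X -> Prop) -> list (X -> Prop)) (r : R) : Prop :=
  forall A, In A U -> diam_le A r /\ diam_le (union (F A)) r.

Definition refines (U1 U2 : list (X -> Prop)) : Prop :=
  (forall A, In A U1 -> exists B, In B U2 /\ subset A B) /\
  (forall B, In B U2 -> exists A, In A U1 /\ subset A B).

Definition finer (U1 : list (X -> Prop)) (F1 : (X -> Prop) -> list (X -> Prop))
    (U2 : list (X -> Prop)) (F2 : (X -> Prop) -> list (X -> Prop)) : Prop :=
  refines U1 U2 /\
  forall A1, In A1 U1 -> forall A2, In A2 U2 -> subset A1 A2 ->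
    forall V, In V (F1 A1) -> exists W, In W (F2 A2) /\ subset V W.

End Defs.

From Stdlib Require Import Reals List Lra Classical.
Open Scope R_scope.

(* One geometric fact drives everything: if R^-(U) > r, then
   every nonempty set of diameter at most r lies inside a single element
   of U (centre a ball of admissible radius s > r at any of its points).
   With R^-(U2) > r >= R^+(F1) this applies to each A in U1 and to each
   union |F1(A)|; essential covers enter only through their "essential
   points", which are nonempty witnesses and lie in no other element.
   - U1 < U2: each A in U1 is nonempty of diameter <= r, so it lies in
     some B in U2; conversely the essential point x of B in U2 lies in some
     A in U1, and the element of U2 containing A must be B itself.
   - F1 finer than F2: for A1 <= A2 pick a in A1; then f a lies in
     |F1(A1)|, which sits inside some W in U2, and W meets f(A2), so W is
     in F2(A2) and contains every element of F1(A1). *)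

Section Resolution.

Variable X : Type.
Variable d : X -> X -> R.
Hypothesis d_metric : is_metric d.

(* Only nonnegativity and d x x = 0 of the metric are ever used. *)
Lemma dist_nonneg : forall x y, 0 <= d x y.
Proof. destruct d_metric as [H _]; exact H. Qed.

Lemma dist_refl : forall x, d x x = 0.
Proof. destruct d_metric as [_ [H _]]; intro x; apply H; reflexivity. Qed.

Lemma ball_center : forall x r, ball d x r x.
Proof.
  intros x r. destruct (Rle_or_lt r 0) as [Hr | Hr].
  - right; auto.
  - left; split; [exact Hr | rewrite dist_refl; exact Hr].
Qed.

Lemma ball_of_dist_lt : forall x y s, d x y < s -> ball d x s y.
Proof.
  intros x y s H. left; split; [| exact H].
  pose proof (dist_nonneg x y); lra.
Qed.

(* The key fact: when R^-(U) exceeds r (witnessed by an admissible radius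
   s > r), a set of diameter <= r containing a point x lies in an element
   of U, namely one containing B(x,s). *)
Lemma small_set_in_cover_element :
  forall (U : list (X -> Prop)) (A : X -> Prop) (r s : R) (x : X),
    inner_res_ok d U s -> r < s -> diam_le d A r -> A x ->
    exists B, In B U /\ subset A B.
Proof.
  intros U A r s x [_ Hs] Hrs HA Ax.
  destruct (Hs x) as [B [HB HballB]].
  exists B; split; [exact HB |].
  intros y Ay. apply HballB, ball_of_dist_lt.
  pose proof (HA x y Ax Ay); lra.
Qed.

Lemma essential_point :
  forall (U : list (X -> Prop)) (A : X -> Prop),
    is_essential d U -> In A U ->
    exists x, A x /\ forall W, In W U -> W x -> W = A.
Proof.
  intros U A [e [_ He]] HA.
  destruct (He A HA) as [x [Hsub Hdisj]].
  exists x; split; [apply Hsub, ball_center |].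
  intros W HW Wx. apply NNPP; intro NE.
  exact (Hdisj W HW NE x (ball_center x e) Wx).
Qed.

Lemma essential_covers_refine :
  forall (U1 U2 : list (X -> Prop)) (r s : R),
    essential_cover d U1 -> is_essential d U2 ->
    (forall A, In A U1 -> diam_le d A r) ->
    inner_res_ok d U2 s -> r < s ->
    refines U1 U2.
Proof.
  intros U1 U2 r s [[_ Hcov1] Hess1] Hess2 Hdiam Hs Hrs. split.
  - intros A HA.
    destruct (essential_point U1 A Hess1 HA) as [a [Aa _]].
    exact (small_set_in_cover_element U2 A r s a Hs Hrs (Hdiam A HA) Aa).
  - intros B HB.
    destruct (essential_point U2 B Hess2 HB) as [x [Bx Honly]].
    destruct (Hcov1 x) as [A [HA Ax]].
    destruct (small_set_in_cover_element U2 A r s x Hs Hrs (Hdiam A HA) Ax)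
      as [B' [HB' HAB']].
    exists A; split; [exact HA |].
    rewrite <- (Honly B' HB' (HAB' x Ax)); exact HAB'.
Qed.

Lemma representation_image :
  forall (f : X -> X) (U : list (X -> Prop)) (F : (X -> Prop) -> list (X -> Prop))
         (A : X -> Prop) (a : X),
    is_cover d U -> is_representation f U F -> In A U -> A a ->
    union (F A) (f a).
Proof.
  intros f U F A a [_ Hcov] [_ Hrep] HA Aa.
  destruct (Hcov (f a)) as [V [HV Vfa]].
  exists V; split; [apply Hrep; eauto | exact Vfa].
Qed.

Lemma representation_refines :
  forall (f : X -> X) (U1 U2 : list (X -> Prop))
         (F1 F2 : (X -> Prop) -> list (X -> Prop)) (r s : R),
    is_cover d U1 -> is_essential d U1 ->
    is_representation f U1 F1 -> is_representation f U2 F2 ->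
    (forall A, In A U1 -> diam_le d (union (F1 A)) r) ->
    inner_res_ok d U2 s -> r < s ->
    forall A1, In A1 U1 -> forall A2, In A2 U2 -> subset A1 A2 ->
      forall V, In V (F1 A1) -> exists W, In W (F2 A2) /\ subset V W.
Proof.
  intros f U1 U2 F1 F2 r s Hcov1 Hess1 HF1 [_ HF2] Hdiam Hs Hrs
         A1 HA1 A2 HA2 HA12 V HV.
  destruct (essential_point U1 A1 Hess1 HA1) as [a [A1a _]].
  pose proof (representation_image f U1 F1 A1 a Hcov1 HF1 HA1 A1a) as Hfa.
  destruct (small_set_in_cover_element U2 (union (F1 A1)) r s (f a)
              Hs Hrs (Hdiam A1 HA1) Hfa) as [W [HW HsubW]].
  exists W; split.
  - apply HF2; [exact HA2 | exact HW |].
    exists a; split; [exact (HA12 a A1a) | exact (HsubW (f a) Hfa)].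
  - intros y Vy. apply HsubW. exists V; split; assumption.
Qed.

End Resolution.

Theorem mainTheorem4 (X : Type) (d : X -> X -> R)
  (hX : inhabited X) (hd : is_metric d) (hb : bounded_metric d)
  (U1 U2 : list (X -> Prop))
  (hU1 : essential_cover d U1) (hU2 : essential_cover d U2)
  (f : X -> X) (F1 : (X -> Prop) -> list (X -> Prop))
  (hF1 : is_representation f U1 F1)
  (hres : exists r, outer_res_le d U1 F1 r /\ inner_res_gt d U2 r) :
  forall F2 : (X -> Prop) -> list (X -> Prop),
    is_representation f U2 F2 -> finer U1 F1 U2 F2.
Proof.
  intros F2 hF2.
  destruct hres as [r [hout [s [hs hrs]]]].
  assert (hdiamA : forall A, In A U1 -> diam_le d A r)
    by (intros A HA; apply (hout A HA)).
  assert (hdiamF : forall A, In A U1 -> diam_le d (union (F1 A)) r)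
    by (intros A HA; apply (hout A HA)).
  split.
  - exact (essential_covers_refine X d hd U1 U2 r s hU1 (proj2 hU2)
             hdiamA hs hrs).
  - exact (representation_refines X d hd f U1 U2 F1 F2 r s (proj1 hU1)
             (proj2 hU1) hF1 hF2 hdiamF hs hrs).
Qed.
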